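(* Let $0<\alpha\le1$ and let $f=f(t,v)$, $u=u(t,v)$ satisfy $f(t,v)\ge0$ and $u(0,v)\le0$ for $t>0$ and almost all $v\in\mathbb{R}^3$. Assume that for some $0<R<\infty$ and all $t>0$, $$\partial_t u-Q(f,u)\le0\ \text{ on } \{|v|>R\},\qquad u\le0\ \text{ on } \{0\le|v|\le R\}.$$ Then $u\le0$ for $t>0$ and almost all $v\in\mathbb{R}^3$.
   Context: $\beta=\frac{1+\alpha}{2}$, $\mathbb{S}^2_+$ a hemisphere, and for $v,v_*\in\mathbb{R}^3$, $n\in\mathbb{S}^2_+$, $v'=v-\beta((v-v_* )\cdot n)n$. The (hard-sphere, inelastic with restitution coefficient $\alpha$) collision operator $Q(f,g)$ is defined by the weak form $$\int_{\mathbb{R}^3}Q(f,g)(v)\phi(v)\,dv=\int_{\mathbb{R}^3}\int_{\mathbb{R}^3}\int_{\mathbb{S}^2_+}|(v-v_* )\cdot n|\,f(v_* )g(v)\,(\phi(v')-\phi(v))\,dn\,dv_*\,dv$$ for test functions $\phi$; equivalently $Q(f,g)=Q^+(f,g)-g\,Lf$ with $Lf(v)=\pi\int|v-v_*|f(v_* )\,dv_*$ and $Q^+(f,g)(v)=\alpha^{-2}\int\int_{\mathbb{S}^2_+}|(v-v_* )\cdot n|f({}'v_* )g({}'v)\,dn\,dv_*$, where ${}'v=v-\gamma((v-v_* )\cdot n)n$, ${}'v_*=v_*+\gamma((v-v_* )\cdot n)n$, $\gamma=\frac12(1+\frac1\alpha)$. Functions are assumed regular enough for these expressions to make sense. *)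

From HB Require Import structures.
From mathcomp Require Import all_boot all_order all_algebra.
From mathcomp Require Import all_classical all_reals all_analysis.
Import Order.TTheory GRing.Theory Num.Theory numFieldNormedType.Exports.
Set Implicit Arguments. Unset Strict Implicit. Unset Printing Implicit Defensive.
Local Open Scope classical_set_scope.
Local Open Scope ring_scope.

Definition vec3 (R : realType) := ((R * R) * R)%type.

Definition leb (R : realType) := @lebesgue_measure R.
Definition leb3 (R : realType) := ((@leb R \x @leb R) \x @leb R)%E.
(* Lebesgue measure on R^2 (angles (theta, phi) of the unit sphere) *)
Definition leb2 (R : realType) := (@leb R \x @leb R)%E.

Definition vadd (R : realType) (v w : vec3 R) : vec3 R :=
  ((v.1.1 + w.1.1, v.1.2 + w.1.2), v.2 + w.2).
Definition vscale (R : realType) (a : R) (v : vec3 R) : vec3 R :=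
  ((a * v.1.1, a * v.1.2), a * v.2).
Definition vsub (R : realType) (v w : vec3 R) : vec3 R := vadd v (vscale (-1) w).
Definition dot3 (R : realType) (v w : vec3 R) : R :=
  v.1.1 * w.1.1 + v.1.2 * w.1.2 + v.2 * w.2.
Definition norm3 (R : realType) (v : vec3 R) : R := Num.sqrt (dot3 v v).

(* Unit vector of spherical angles (theta, phi). The hemisphere S^2_+ is
   parametrized by theta in [0, pi/2], phi in [0, 2 pi], with surface
   measure dn = sin theta dtheta dphi. *)
Definition sph (R : realType) (a : R * R) : vec3 R :=
  ((sin a.1 * cos a.2, sin a.1 * sin a.2), cos a.1).
Definition in_hemi (R : realType) (a : R * R) : bool :=
  (0 <= a.1 <= pi / 2) && (0 <= a.2 <= 2 * pi).

Definition beta (R : realType) (alpha : R) : R := (1 + alpha) / 2.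

Definition vpost (R : realType) (alpha : R) (v vs n : vec3 R) : vec3 R :=
  vsub v (vscale (beta alpha * dot3 (vsub v vs) n) n).

(* The weight of the weak form, as a function of z = ((v, v_* ), (theta, phi)):
   |(v - v_* ) . n| f(v_* ) g(v), times the surface density
   1_{S^2_+} sin theta. *)
Definition coll_weight (R : realType) (f g : vec3 R -> R)
    (z : (vec3 R * vec3 R) * (R * R)) : R :=
  let v := z.1.1 in let vs := z.1.2 in let a := z.2 in
  (if in_hemi a then sin a.1 else 0) *
  `|dot3 (vsub v vs) (sph a)| * f vs * g v.

Definition weak_integrand (R : realType) (alpha : R) (f g phi : vec3 R -> R)
    (z : (vec3 R * vec3 R) * (R * R)) : R :=
  let v := z.1.1 in let vs := z.1.2 in let n := sph z.2 in
  coll_weight f g z * (phi (vpost alpha v vs n) - phi v).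

(* [is_Q alpha f g q] : q is the collision operator Q(f, g), defined by the
   weak form
     int Q(f,g) phi dv = int int int_{S^2_+} |(v-v_* ).n| f(v_* ) g(v)
                                   (phi(v') - phi(v)) dn dv_* dv
   for all (bounded measurable) test functions phi.  Regularity ("regular
   enough for these expressions to make sense"): q is integrable and the
   collision weight is integrable on R^3 x R^3 x S^2_+. *)
Definition is_Q (R : realType) (alpha : R) (f g q : vec3 R -> R) : Prop :=
  measurable_fun setT q /\
  (@leb3 R).-integrable setT (EFin \o q) /\
  ((@leb3 R \x @leb3 R) \x @leb2 R)%E.-integrable setT (EFin \o coll_weight f g) /\
  forall phi : vec3 R -> R, measurable_fun setT phi ->
    (exists M : R, forall v, `|phi v| <= M) ->
    (\int[@leb3 R]_v (q v * phi v)%:E =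
     \int[(@leb3 R \x @leb3 R) \x @leb2 R]_z (weak_integrand alpha f g phi z)%:E)%E.

Definition dt (R : realType) (u : R -> vec3 R -> R) (t : R) (v : vec3 R) : R :=
  derive1 (fun s => u s v) t.

From HB Require Import structures.
From mathcomp Require Import all_boot all_order all_algebra.
From mathcomp Require Import all_classical all_reals all_analysis.
From mathcomp Require Import measurable_realfun ring lra.
Import Order.TTheory GRing.Theory Num.Theory numFieldNormedType.Exports.
Local Open Scope classical_set_scope.
Local Open Scope ring_scope.
Import HBNNSimple.

(* Let G(t) = \int u(t,v)_+ dv.  Domination of u and d_t u makes G Lipschitz, and
   the left difference quotients of G at s are bounded, in the limit, by
   \int 1_{u(s)>0} d_t u(s).  Outside the ball d_t u <= Q(f,u) and inside it
   1_{u(s)>0} = 0, so this is at most \int Q(f,u) phi for phi = 1_{u(s)>0}; by the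
   weak form it equals an integral of |(v - v_* ).n| f(v_* ) u(v) (phi(v') - phi(v)),
   which is <= 0 because u(v) (phi(v') - phi(v)) <= 0 for every v'.  A Lipschitz
   function with nonpositive left Dini derivative does not increase, so
   G(t) <= G(0) = 0. *)

Lemma maxr0_le_dist {R : realDomainType} (x y : R) :
  Num.max x 0 <= Num.max y 0 + `|x - y|.
Proof.
have yM : y <= Num.max y 0 by rewrite le_max lexx.
have M0 : 0 <= Num.max y 0 by rewrite le_max lexx orbT.
have := ler_norm (x - y); have := normr_ge0 (x - y).
by rewrite ge_max; move=> *; apply/andP; split; lra.
Qed.

Lemma maxr0_le_indic {R : realDomainType} (x y : R) :
  Num.max x 0 <= Num.max y 0 + (if 0 < x then x - y else 0).
Proof.
have yM : y <= Num.max y 0 by rewrite le_max lexx.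
have M0 : 0 <= Num.max y 0 by rewrite le_max lexx orbT.
rewrite ge_max; case: ltP => x0; apply/andP; split; lra.
Qed.

Lemma normr_indic_le1 {T} {R : numDomainType} (A : set T) x : `|\1_A x| <= 1 :> R.
Proof. by rewrite indicE; case: (_ \in _); rewrite ?normr1 ?normr0. Qed.

Lemma indic_posE {T} {R : realDomainType} (w : T -> R) x :
  \1_[set y | 0 < w y] x = if 0 < w x then 1 else 0 :> R.
Proof.
rewrite indicE; case: ifPn => wx; first by rewrite mem_set.
by rewrite memNset //; exact/negP.
Qed.

Lemma mul_sub_indic_pos_le0 {T} {R : realDomainType} (w : T -> R) x y :
  w x * (\1_[set z | 0 < w z] y - \1_[set z | 0 < w z] x) <= 0.
Proof. by rewrite !indic_posE; case: ifP => _; case: ltP => wx; nra. Qed.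

Lemma ler_dist_derive1 {R : realType} (w : R -> R) (M s t : R) : s <= t ->
  {within `[s, t], continuous w} -> {in `]s, t[, forall x, derivable w x 1} ->
  {in `]s, t[, forall x, `|derive1 w x| <= M} -> `|w t - w s| <= M * (t - s).
Proof.
rewrite le_eqVlt => /predU1P[<-|st] wc wd w'M; first by rewrite !subrr normr0 mulr0.
have [c cst ->] := MVT st (fun x xst => derivableP (wd x xst)) wc.
have st0 : 0 <= t - s by rewrite subr_ge0 ltW.
by rewrite normrM (ger0_norm st0) ler_wpM2r // -derive1E w'M.
Qed.

Lemma cvg_derive1_seq {R : realType} {w : R -> R} {s : R} {k : R^nat} :
  derivable w s 1 -> k @ \oo --> 0 -> (forall n, k n != 0) ->
  (k n)^-1 * (w (k n + s) - w s) @[n --> \oo] --> derive1 w s.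
Proof.
move=> dw k0 kn0.
have k0' : k @ \oo --> (0 : R)^'.
  by move=> A /k0 [N _ kA]; exists N => // n /kA; apply; exact: kn0.
have E : (fun h : R => h^-1 *: ((w \o shift s) (h *: 1) - w s)) =
           (fun h : R => h^-1 * (w (h + s) - w s)).
  by apply/funext => h /=; rewrite /shift /= [h *: 1]mulr1.
move: dw; rewrite /derivable E => dw.
exact: cvg_comp k0' dw.
Qed.

Section left_dini.
Context {R : realType}.
Variables (G : R -> R) (a b L : R).
Hypothesis G_lip : forall {s t}, a <= s -> s <= t -> t <= b -> G t <= G s + L * (t - s).
Hypothesis G_dini : forall {s e}, a < s -> s <= b -> 0 < e ->
  exists2 h, 0 < h <= s - a & G s <= G (s - h) + e * h.

(* The infimum of A e belongs to A e by the Lipschitz bound from the right, and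
   equals a since otherwise the Dini condition produces a smaller element. *)
Let A e := [set s | a <= s <= b /\ G b <= G s + e * (b - s)].

Let inf_mem e : a <= b -> 0 < e -> A e (inf (A e)).
Proof.
move=> ab e0; have Ab : A e b by split; [rewrite ab lexx | rewrite subrr mulr0 addr0].
have lbA : lbound (A e) a by move=> x [/andP[]].
have hinf : has_inf (A e) by split; [exists b | exists a].
set s0 := inf (A e).
have s0a : a <= s0 by apply: lb_le_inf => //; exists b.
have s0b : s0 <= b by apply: ge_inf => //; exists a.
split; first by rewrite s0a s0b.
apply/ler_addgt0Pr => d d0.
have dL : 0 < d / (`|L| + 1) by rewrite divr_gt0 // ltr_wpDl.
have [t At ts0] := inf_adherent dL hinf.
have s0t : s0 <= t by apply: ge_inf At; exists a.
case: At => /andP[_ tb] Gt.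
have Lt : L * (t - s0) <= d.
  apply: (le_trans (ler_norm _)); rewrite normrM (ger0_norm (x := t - s0)) ?subr_ge0 //.
  apply: (@le_trans _ _ (`|L| * (d / (`|L| + 1)))).
    by apply: ler_wpM2l => //; rewrite lerBlDl ltW.
  by rewrite mulrA ler_pdivrMr ?ltr_wpDl // mulrDr mulr1 mulrC lerDl ltW.
have := G_lip s0a s0t tb.
have : e * (b - t) <= e * (b - s0) by apply: ler_wpM2l; [exact: ltW | rewrite lerB].
lra.
Qed.

Let le_slope e : a < b -> 0 < e -> G b <= G a + e * (b - a).
Proof.
move=> ab e0; have [/andP[s0a s0b] Gs0] := inf_mem e (ltW ab) e0.
suff <- : inf (A e) = a by [].
apply/le_anti; rewrite s0a andbT leNgt; apply/negP => as0.
have [h /andP[h0 hs] Gh] := G_dini as0 s0b e0.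
have As : A e (inf (A e) - h).
  split; first by apply/andP; split; lra.
  have -> : e * (b - (inf (A e) - h)) = e * (b - inf (A e)) + e * h by ring.
  lra.
have : inf (A e) <= inf (A e) - h.
  by apply: ge_inf As; exists a => x [/andP[]].
lra.
Qed.

Lemma left_dini_le : a < b -> G b <= G a.
Proof.
move=> ab; apply/ler_addgt0Pr => e e0.
have ba0 : 0 < b - a by rewrite subr_gt0.
have := le_slope (e / (b - a)) ab (divr_gt0 e0 ba0).
by rewrite divfK // subr_eq0 gt_eqF.
Qed.

End left_dini.

Lemma measurable_indic_pos {d} {T : measurableType d} {R : realType} {w : T -> R} :
  measurable_fun setT w -> measurable_fun setT (\1_[set x | 0 < w x] : T -> R).
Proof.
move=> mw; apply: measurable_indic.
have -> : [set x | 0 < w x] = setT `&` w @^-1` `]0, +oo[.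
  by rewrite setTI; apply/seteqP; split => x /=; rewrite in_itv /= andbT.
exact: mw.
Qed.

Section integral_comparison.
Context {d} {T : measurableType d} {R : realType} {mu : {measure set T -> \bar R}}.

Lemma integral_ae_le0 (f : T -> \bar R) :
  {ae mu, forall x, (f x <= 0)%E} -> (\int[mu]_x f x <= 0)%E.
Proof.
move=> f_le0.
have fp0 : (\int[mu]_x f^\+%E x <= 0)%E.
  rewrite ge0_integralTE; last by move=> x; exact: funepos_ge0.
  apply: ge_ereal_sup => _ [h /= hfp <-].
  rewrite -integralT_nnsfun -(integral0 mu setT).
  apply: ae_ge0_le_integral => //.
  - by move=> x _; rewrite lee_fin; exact: fun_ge0.
  - by apply/measurable_EFinP; exact: measurable_funPT.
  - apply: filterS f_le0 => x fx _; apply: le_trans (hfp x) _.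
    by rewrite funeposE ge_max fx lexx.
rewrite integralE; apply: (@le_trans _ _ (0 - 0)%E); last by rewrite sube0.
by apply: leeB => //; apply: integral_ge0 => x _; exact: funeneg_ge0.
Qed.

Lemma ae_le_integral (f g : T -> R) :
  mu.-integrable setT (EFin \o f) -> mu.-integrable setT (EFin \o g) ->
  {ae mu, forall x, f x <= g x} ->
  (\int[mu]_x (f x)%:E <= \int[mu]_x (g x)%:E)%E.
Proof.
move=> intf intg fg; rewrite -sube_le0 -(integralB _ intf intg) //.
by apply: integral_ae_le0; apply: filterS fg => x fx /=; rewrite -EFinB lee_fin subr_le0.
Qed.

Lemma integrable_le_scale {f g : T -> R} (c : R) :
  mu.-integrable setT (EFin \o g) -> measurable_fun setT f ->
  (forall x, `|f x| <= c * g x) -> mu.-integrable setT (EFin \o f).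
Proof.
move=> intg mf fg; have intcg := integrableZl measurableT c intg.
apply: le_integrable intcg => //= [|x _]; first exact/measurable_EFinP.
by rewrite lee_fin; apply: le_trans (fg x) (ler_norm _).
Qed.

End integral_comparison.

Section positive_part.
Context {d} {T : measurableType d} {R : realType} (mu : {measure set T -> \bar R}).
Variables (u : R -> T -> R) (g : T -> R) (b : R).
Hypothesis b_gt0 : 0 < b.
Hypothesis mu_u : forall t, 0 <= t -> measurable_fun setT (u t).
Hypothesis cont_u : forall v, {within `[0, +oo[, continuous (u ^~ v)}.
Hypothesis der_u : forall v t, 0 < t -> derivable (u ^~ v) t 1.
Hypothesis int_g : mu.-integrable setT (EFin \o g).
Hypothesis u_le_g : forall v, `|u b v| <= g v.
Hypothesis du_le_g : forall t v, 0 < t <= b -> `|derive1 (u ^~ v) t| <= g v.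

Let g_ge0 v : 0 <= g v. Proof. exact: le_trans (u_le_g v). Qed.

Let mu_g : measurable_fun setT g.
Proof. by apply/measurable_EFinP; exact: measurable_int int_g. Qed.

Let u_lipschitz v s t : 0 <= s -> s <= t -> t <= b ->
  `|u t v - u s v| <= g v * (t - s).
Proof.
move=> s0 st tb; apply: (@ler_dist_derive1 _ (u ^~ v)) => // [|x|x].
- apply: continuous_subspaceW (cont_u v) => x /=; rewrite !in_itv /= => /andP[sx _].
  by rewrite (le_trans s0 sx).
- by rewrite in_itv /= => /andP[sx _]; apply: der_u; exact: le_lt_trans sx.
- rewrite in_itv /= => /andP[sx xt]; apply: du_le_g.
  by rewrite (le_lt_trans s0 sx) (le_trans (ltW xt)).
Qed.

Let u_bound v s : 0 <= s -> s <= b -> `|u s v| <= (1 + b) * g v.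
Proof.
move=> s0 sb; have := u_lipschitz v s b s0 sb (lexx b).
have := ler_normD (u b v) (u s v - u b v); rewrite addrC subrK distrC.
have := u_le_g v; have : g v * (b - s) <= g v * b.
  by rewrite ler_wpM2l // lerBlDr lerDl.
lra.
Qed.

Let mu_pos s : 0 <= s -> measurable_fun setT (fun v => Num.max (u s v) 0).
Proof. by move=> s0; apply: measurable_maxr => //; exact: mu_u. Qed.

Let int_pos s : 0 <= s -> s <= b ->
  mu.-integrable setT (EFin \o (fun v => Num.max (u s v) 0)).
Proof.
move=> s0 sb; apply: (integrable_le_scale (1 + b) int_g (mu_pos s s0)) => v.
apply: le_trans (u_bound v s s0 sb).
by rewrite ger0_norm ?le_max ?lexx ?orbT // ge_max normr_ge0 ler_norm.
Qed.

Let G s := \int[mu]_v Num.max (u s v) 0.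

Let G_lipschitz s t : 0 <= s -> s <= t -> t <= b ->
  G t <= G s + (\int[mu]_v g v) * (t - s).
Proof.
move=> s0 st tb; have t0 := le_trans s0 st.
have int_gts : mu.-integrable setT (EFin \o (fun v => g v * (t - s))).
  apply: (integrable_le_scale (t - s) int_g) => [|v]; first exact: measurable_funM.
  by rewrite normrM !ger0_norm ?subr_ge0 // mulrC.
rewrite /G -RintegralZr // -RintegralD //; last exact: int_pos (le_trans st tb).
apply: le_Rintegral => //; first exact: int_pos.
  have := integrableD measurableT (int_pos s s0 (le_trans st tb)) int_gts.
  by apply: eq_integrable => // v _ /=; rewrite EFinD.
move=> v _; apply: le_trans (maxr0_le_dist (u t v) (u s v)) _.
by rewrite lerD2l; exact: u_lipschitz.
Qed.

Let dq s h v := (u s v - u (s - h) v) / h.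

Let mu_dq s h : 0 <= s - h -> 0 <= s -> measurable_fun setT (dq s h).
Proof.
by move=> sh0 s0; apply: measurable_funM => //; apply: measurable_funB; exact: mu_u.
Qed.

Let dq_le_g s h v : 0 < h <= s -> s <= b -> `|dq s h v| <= g v.
Proof.
move=> /andP[h0 hs] sb; have sh0 : 0 <= s - h by rewrite subr_ge0.
have shs : s - h <= s by rewrite lerBlDr lerDl ltW.
have := u_lipschitz v (s - h) s sh0 shs sb.
rewrite subKr => lip.
by rewrite /dq normrM normfV (gtr0_norm h0) ler_pdivrMr.
Qed.

Let step (s : R) n := s * harmonic n.

Let step_gt0 s n : 0 < s -> 0 < step s n.
Proof. by move=> s0; rewrite mulr_gt0 // harmonic_gt0. Qed.

Let step_le s n : 0 <= s -> step s n <= s.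
Proof. by move=> s0; rewrite ler_piMr // invf_le1 ?ler1n. Qed.

Let cvg_dq s v : 0 < s -> dq s (step s n) v @[n --> \oo] --> derive1 (u ^~ v) s.
Proof.
move=> s0; have step0 : step s n @[n --> \oo] --> 0.
  by rewrite -(mulr0 s); apply: cvgM; [exact: cvg_cst | exact: cvg_harmonic].
have mstep0 : - step s n @[n --> \oo] --> 0 by rewrite -oppr0; exact: cvgN.
have mstep_neq0 n : - step s n != 0 by rewrite oppr_eq0 gt_eqF // step_gt0.
suff -> : (fun n => dq s (step s n) v) =
          (fun n => (- step s n)^-1 * (u (- step s n + s) v - u s v)).
  exact: cvg_derive1_seq (der_u v s s0) mstep0 mstep_neq0.
by apply/funext => n; rewrite /dq invrN mulNr -mulrN opprB mulrC (addrC (- _) s).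
Qed.

Let mu_derive1 s : 0 < s -> measurable_fun setT (fun v => derive1 (u ^~ v) s).
Proof.
move=> s0; apply: (measurable_fun_cvg (h := fun n => dq s (step s n))) => [n|v _].
  by apply: mu_dq; rewrite ?subr_ge0 ?step_le // ltW.
exact: cvg_dq.
Qed.

Let mu_indic s : 0 <= s -> measurable_fun setT (\1_[set v | 0 < u s v] : T -> R).
Proof. by move=> s0; apply: measurable_indic_pos; exact: mu_u. Qed.

Lemma integrable_indic_derive1 s : 0 < s <= b ->
  mu.-integrable setT
    (EFin \o (fun v => \1_[set x | 0 < u s x] v * derive1 (u ^~ v) s)).
Proof.
move=> /andP[s0 sb]; apply: (integrable_le_scale 1 int_g) => [|v].
  by apply: measurable_funM; [exact: mu_indic (ltW s0) | exact: mu_derive1].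
by rewrite normrM mul1r -[g v]mul1r ler_pM // ?normr_indic_le1 // du_le_g // s0.
Qed.

Let cvg_Rintegral_dq s : 0 < s <= b ->
  \int[mu]_v (\1_[set x | 0 < u s x] v * dq s (step s n) v) @[n --> \oo] -->
  \int[mu]_v (\1_[set x | 0 < u s x] v * derive1 (u ^~ v) s).
Proof.
move=> /[dup] /andP[s0 sb] sb'.
have mD n : measurable_fun setT
    (EFin \o (fun v => \1_[set x | 0 < u s x] v * dq s (step s n) v)).
  apply/measurable_EFinP; apply: measurable_funM; first exact: mu_indic (ltW s0).
  by apply: mu_dq; rewrite ?subr_ge0 ?step_le // ltW.
have intDl := integrable_indic_derive1 s sb'.
have D_le_g : {ae mu, forall v n, setT v ->
    (`|(\1_[set x | 0 < u s x] v * dq s (step s n) v)%:E| <= (g v)%:E)%E}.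
  apply: aeW => v n _; rewrite lee_fin normrM -[g v]mul1r ler_pM // ?normr_indic_le1 //.
  by apply: dq_le_g => //; rewrite step_gt0 // step_le // ltW.
have cvgD : {ae mu, forall v, setT v ->
    (\1_[set x | 0 < u s x] v * dq s (step s n) v)%:E @[n --> \oo] -->
    (\1_[set x | 0 < u s x] v * derive1 (u ^~ v) s)%:E}.
  apply: aeW => v _; apply: cvg_EFin; first exact: nearW.
  by apply: cvgM; [exact: cvg_cst | exact: cvg_dq].
have [_ _] := dominated_convergence measurableT mD (measurable_int _ intDl) cvgD int_g D_le_g.
by rewrite -(fineK (integrable_fin_num measurableT intDl)) => /fine_cvgP[].
Qed.

Let G_step s h : 0 < h <= s -> s <= b ->
  G s <= G (s - h) + h * \int[mu]_v (\1_[set x | 0 < u s x] v * dq s h v).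
Proof.
move=> /[dup] /andP[h0 hs] hs' sb; have sh0 : 0 <= s - h by rewrite subr_ge0.
have s0 := ltW (lt_le_trans h0 hs).
have intD : mu.-integrable setT
    (EFin \o (fun v => \1_[set x | 0 < u s x] v * dq s h v)).
  apply: (integrable_le_scale 1 int_g) => [|v].
    by apply: measurable_funM; [exact: mu_indic | exact: mu_dq].
  by rewrite normrM -[g v]mul1r ler_pM // ?normr_indic_le1 // mul1r dq_le_g.
have shb : s - h <= b by apply: le_trans sb; rewrite lerBlDr lerDl ltW.
have int_sh := int_pos (s - h) sh0 shb.
have intZD : mu.-integrable setT
    (EFin \o (fun v => h * (\1_[set x | 0 < u s x] v * dq s h v))).
  by apply: eq_integrable (integrableZl measurableT h intD) => // v _; rewrite /= EFinM.
apply: (@le_trans _ _ (\int[mu]_v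
    (Num.max (u (s - h) v) 0 + h * (\1_[set x | 0 < u s x] v * dq s h v)))).
  apply: le_Rintegral => //; first exact: int_pos.
    have := integrableD measurableT int_sh intZD.
    by apply: eq_integrable => // v _ /=; rewrite EFinD.
  move=> v _; apply: le_trans (maxr0_le_indic (u s v) (u (s - h) v)) _.
  rewrite lerD2l /dq indic_posE; case: ifP => _; last by rewrite !mul0r mulr0.
  by rewrite mul1r mulrC divfK // gt_eqF.
by rewrite RintegralD // RintegralZl.
Qed.

Let G_left_dini s e : 0 < s -> s <= b -> 0 < e ->
  (\int[mu]_v (\1_[set x | 0 < u s x] v * derive1 (u ^~ v) s)%:E <= 0)%E ->
  exists2 h, 0 < h <= s - 0 & G s <= G (s - h) + e * h.
Proof.
move=> s0 sb e0 dis; have sb' : 0 < s <= b by rewrite s0.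
have lim_lt_e : \int[mu]_v (\1_[set x | 0 < u s x] v * derive1 (u ^~ v) s) < e.
  exact: le_lt_trans (fine_le0 dis) e0.
have [N _ ltN] := cvgr_lt _ (cvg_Rintegral_dq s sb') _ lim_lt_e.
have hN : 0 < step s N <= s by rewrite step_gt0 // step_le // ltW.
exists (step s N); first by rewrite subr0.
apply: le_trans (G_step s (step s N) hN sb) _.
by rewrite lerD2l mulrC ler_pM2r ?step_gt0 //; exact: ltW (ltN N (leqnn N)).
Qed.

Lemma pos_part_ae_le0 :
  (forall s, 0 < s <= b ->
    (\int[mu]_v (\1_[set x | 0 < u s x] v * derive1 (u ^~ v) s)%:E <= 0)%E) ->
  {ae mu, forall v, u 0 v <= 0} -> {ae mu, forall v, u b v <= 0}.
Proof.
move=> dis u0_le0.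
have G0 : G 0 <= 0.
  apply: fine_le0; apply: integral_ae_le0; apply: filterS u0_le0 => v u0v.
  by rewrite lee_fin ge_max u0v lexx.
have Gb0 : G b = 0.
  apply/le_anti; rewrite Rintegral_ge0 ?andbT => [|v _]; last by rewrite le_max lexx orbT.
  apply: le_trans G0; apply: (@left_dini_le _ G 0 b _ G_lipschitz) => // s' e s'0 s'b e0.
  by apply: G_left_dini => //; apply: dis; rewrite s'0.
have int_b := int_pos b (ltW b_gt0) (lexx b).
have abs0 : (\int[mu]_v `|(Num.max (u b v) 0)%:E| = 0)%E.
  transitivity (G b)%:E; last by rewrite Gb0.
  rewrite /G /Rintegral fineK ?(integrable_fin_num measurableT int_b) //.
  by apply: eq_integral => v _; rewrite gee0_abs // lee_fin le_max lexx orbT.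
have := (ae_eq_integral_abs mu measurableT (measurable_int _ int_b)).1 abs0.
apply: filterS => v /(_ I) /= [max0].
have : u b v <= Num.max (u b v) 0 by rewrite le_max lexx.
by rewrite max0.
Qed.

End positive_part.

(* mathcomp-analysis only declares this instance locally to a section. *)
Lemma sigma_finite_product d1 d2 (T1 : measurableType d1) (T2 : measurableType d2)
    (R : realType) (m1 : {measure set T1 -> \bar R})
    (m2 : {sigma_finite_measure set T2 -> \bar R}) :
  sigma_finite setT m1 -> sigma_finite setT (m1 \x m2)%E.
Proof.
move=> /sigma_finiteP[F [UF ndF Ffin]].
have /sigma_finiteP[G [UG ndG Gfin]] := sigma_finiteT m2.
exists (fun n => F n `*` G n).
  apply/seteqP; split => [[x y] _|//].
  have [i _ Fx] : (\bigcup_n F n) x by rewrite -UF.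
  have [j _ Gy] : (\bigcup_n G n) y by rewrite -UG.
  exists (maxn i j) => //; split.
  - by move: x Fx; apply/subsetPset/ndF/leq_maxl.
  - by move: y Gy; apply/subsetPset/ndG/leq_maxr.
move=> n; have [mF mFfin] := Ffin n; have [mG mGfin] := Gfin n.
split; first exact: measurableX.
by rewrite product_measure1E // lte_mul_pinfty // ge0_fin_numE.
Qed.

Lemma leb2_sigma_finite (R : realType) : sigma_finite setT (@leb2 R).
Proof. exact: (@sigma_finite_product _ _ _ _ _ (@leb R) (@leb R) (sigma_finiteT _)). Qed.

HB.instance Definition _ (R : realType) := Measure.on (@leb2 R).
HB.instance Definition _ (R : realType) :=
  Measure_isSigmaFinite.Build _ _ _ (@leb2 R) (leb2_sigma_finite R).

Lemma leb3_sigma_finite (R : realType) : sigma_finite setT (@leb3 R).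
Proof. exact: (@sigma_finite_product _ _ _ _ _ (@leb2 R) (@leb R) (leb2_sigma_finite R)). Qed.

HB.instance Definition _ (R : realType) := Measure.on (@leb3 R).
HB.instance Definition _ (R : realType) :=
  Measure_isSigmaFinite.Build _ _ _ (@leb3 R) (leb3_sigma_finite R).

Section collision_sign.
Variable R : realType.
Implicit Types (alpha : R) (f g q : vec3 R -> R).

Lemma weak_integrand_indic_le0 alpha f g z : 0 <= f z.1.2 ->
  weak_integrand alpha f g (\1_[set v | 0 < g v]) z <= 0.
Proof.
move=> fz; rewrite /weak_integrand /coll_weight /= -mulrA.
apply: mulr_ge0_le0; last exact: mul_sub_indic_pos_le0.
rewrite mulr_ge0 // mulr_ge0 //; case: ifPn => // /andP[/andP[a0 a1] _].
apply: sin_ge0_pi; rewrite a0 (le_trans a1) //.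
by rewrite ler_pdivrMr // ler_peMr // ?pi_ge0 // ler1n.
Qed.

Lemma weak_form_indic_le0 alpha f g : {ae @leb3 R, forall v, 0 <= f v} ->
  (\int[((@leb3 R \x @leb3 R) \x @leb2 R)%E]_z
     (weak_integrand alpha f g (\1_[set v | 0 < g v]) z)%:E <= 0)%E.
Proof.
case=> N [mN N0 f0N]; apply: integral_ae_le0.
exists ((setT `*` N) `*` setT); split.
- by apply: measurableX => //; exact: measurableX.
- rewrite [LHS]product_measure1E //; last exact: measurableX.
  (* [N0] is [leb3 N = 0], seen through the sigma-finite instance of [leb3]. *)
  by rewrite [X in (X * _)%E]product_measure1E // (_ : _ N = 0%E) ?mule0 ?mul0e.
move=> [[v vs] a] /= wpos; split => //; split => //; apply: f0N => /= fvs.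
by apply: wpos; rewrite lee_fin weak_integrand_indic_le0.
Qed.

Lemma subsolution_indic_integral_le0 alpha (rad : R) f w w' q :
  measurable_fun setT w -> {ae @leb3 R, forall v, 0 <= f v} -> is_Q alpha f w q ->
  (@leb3 R).-integrable setT (EFin \o (fun v => \1_[set x | 0 < w x] v * w' v)) ->
  {ae @leb3 R, forall v, rad < norm3 v -> w' v - q v <= 0} ->
  {ae @leb3 R, forall v, norm3 v <= rad -> w v <= 0} ->
  (\int[@leb3 R]_v (\1_[set x | 0 < w x] v * w' v)%:E <= 0)%E.
Proof.
move=> mw f_ge0 [mq [intq [_ weakQ]]] intw' w'_le_q w_le0.
have mind := measurable_indic_pos mw.
have intqi : (@leb3 R).-integrable setT (EFin \o (fun v => q v * \1_[set x | 0 < w x] v)).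
  apply: (integrable_le_scale 1 (integrable_norm intq)) => [|v /=].
    exact: measurable_funM.
  by rewrite mul1r normrM -[X in _ <= X]mulr1 ler_pM // normr_indic_le1.
apply: le_trans (weak_form_indic_le0 alpha f w f_ge0).
rewrite -weakQ //; last by exists 1 => v; exact: normr_indic_le1.
apply: ae_le_integral => //.
apply: (@filterS2 _ _ (ae_filter_ringOfSetsType _) _ _ _ _ w'_le_q w_le0) => v w'q w0.
rewrite mulrC indic_posE; case: ifPn => wv; last by rewrite !mulr0.
rewrite !mulr1 -subr_le0; apply: w'q; rewrite ltNge.
by apply: contraTN wv => /w0; rewrite -leNgt.
Qed.

End collision_sign.

Theorem lemma3p1 (R : realType) (alpha : R) (f u : R -> vec3 R -> R) (rad : R)
  (* 0 < alpha <= 1 *)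
  (halpha : 0 < alpha <= 1)
  (* 0 < R < oo *)
  (hrad : 0 < rad)
  (* regularity of f and u *)
  (hfm : forall t, 0 < t -> measurable_fun setT (f t))
  (hum : forall t, 0 <= t -> measurable_fun setT (u t))
  (hucont : forall v, {within `[0, +oo[, continuous (fun s => u s v)})
  (hudiff : forall v t, 0 < t -> derivable (fun s => u s v) t 1)
  (hudom : forall T, 0 < T -> exists g : vec3 R -> R,
      (@leb3 R).-integrable setT (EFin \o g) /\
      forall t v, 0 < t <= T -> `|u t v| <= g v /\ `|dt u t v| <= g v)
  (* f >= 0 for t > 0 and a.a. v *)
  (hf : forall t, 0 < t -> {ae @leb3 R, forall v, 0 <= f t v})
  (* u(0, v) <= 0 for a.a. v *)
  (hu0 : {ae @leb3 R, forall v, u 0 v <= 0})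
  (* d_t u - Q(f, u) <= 0 on {|v| > R}, for all t > 0 *)
  (hsub : forall t, 0 < t -> exists q : vec3 R -> R,
      is_Q alpha (f t) (u t) q /\
      {ae @leb3 R, forall v, rad < norm3 v -> dt u t v - q v <= 0})
  (* u <= 0 on {0 <= |v| <= R}, for all t > 0 *)
  (hin : forall t, 0 < t -> {ae @leb3 R, forall v, norm3 v <= rad -> u t v <= 0}) :
  forall t, 0 < t -> {ae @leb3 R, forall v, u t v <= 0}.
Proof.
move=> t t0; have [g [int_g g_bound]] := hudom t t0.
have u_le_g v : `|u t v| <= g v by apply: (g_bound t v _).1; rewrite t0 lexx.
have du_le_g s v : 0 < s <= t -> `|dt u s v| <= g v by move=> st; exact: (g_bound s v st).2.
apply: (pos_part_ae_le0 (@leb3 R) u g t t0 hum hucont hudiff int_g u_le_g du_le_g _ hu0).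
move=> s st; have s0 : 0 < s by case/andP: st.
have [q [Qq dt_le_q]] := hsub s s0.
apply: (subsolution_indic_integral_le0 _ _ rad _ _ _ _ (hum s (ltW s0)) (hf s s0) Qq _ dt_le_q
  (hin s s0)).
exact: (integrable_indic_derive1 (@leb3 R) u g t hum hudiff int_g du_le_g s st).
Qed.
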